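(* Let $S$ be a finite pseudo-nilpotent semigroup. If $I$ is an ideal of $S$ such that both $I$ and the Rees factor semigroup $S/I$ are nilpotent, then $S$ is nilpotent.
   Context: For a semigroup $S$, $S^1$ denotes $S$ with an identity adjoined (if $S$ has none). For $x,y\in S$ and $z_1,z_2,\ldots\in S^1$ define recursively $\lambda_0=x$, $\rho_0=y$, $\lambda_{n+1}=\lambda_n z_{n+1}\rho_n$, $\rho_{n+1}=\rho_n z_{n+1}\lambda_n$; write $\lambda_n(x,y,z_1,\ldots,z_n)$ and $\rho_n(x,y,z_1,\ldots,z_n)$. A semigroup $S$ is nilpotent (in the sense of Mal'cev) if there is a positive integer $n$ with $\lambda_n(a,b,c_1,\ldots,c_n)=\rho_n(a,b,c_1,\ldots,c_n)$ for all $a,b\in S$ and $c_1,\ldots,c_n\in S^1$. $\langle X\rangle$ denotes the subsemigroup generated by $X$. The upper non-nilpotent graph $\mathcal{N}_S$ has vertex set $S$, with an edge between $x$ and $y$ iff $\langle x,y\rangle$ is not nilpotent. The empty set is regarded as an ideal; for an ideal $I$ of $S$, $S/I$ is the Rees factor semigroup, with $S/\emptyset=S$. A semigroup $S$ is pseudo-nilpotent if the following holds: whenever $x,y\in S$, $w_1,\ldots,w_m\in S^1$, $T$ is the subsemigroup generated by $x,y$ and those $w_i$ lying in $S$, $I$ is an ideal (possibly empty) of $T$, and $t<m$ are non-negative integers such that, writing $\lambda_k=\lambda_k(x,y,w_1,\ldots,w_k)$ and $\rho_k=\rho_k(x,y,w_1,\ldots,w_k)$, one has $\lambda_t\neq\rho_t$,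 $(\lambda_t,\rho_t)=(\lambda_m,\rho_m)$ and $\lambda_m,\rho_m\notin I$, then for every $0\le i\le m$ there is an edge in $\mathcal{N}_{T/I}$ between (the images of) $\lambda_i$ and $\rho_i$. *)

From mathcomp Require Import all_boot.
Set Implicit Arguments. Unset Strict Implicit. Unset Printing Implicit Defensive.

(* A semigroup is a carrier type U with a binary operation op; a
   (sub)semigroup is given by a carrier predicate A : U -> Prop closed under op.
   S^1 is modelled by option U, None standing for the adjoined identity. *)

Section Semigroups.
Variables (U : Type) (op : U -> U -> U).

Definition mulz (a : U) (z : option U) (b : U) : U :=
  match z with Some c => op (op a c) b | None => op a b end.

(* (lambda_n, rho_n)(x, y, z_1, ..., z_n); z k is z_k (z 0 unused) *)
Fixpoint lamrho (x y : U) (z : nat -> option U) (n : nat) : U * U :=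
  match n with
  | 0 => (x, y)
  | k.+1 => let p := lamrho x y z k in
            (mulz p.1 (z k.+1) p.2, mulz p.2 (z k.+1) p.1)
  end.

Definition lam x y z n := (lamrho x y z n).1.
Definition rho x y z n := (lamrho x y z n).2.

Definition oin (A : U -> Prop) (u : option U) : Prop :=
  match u with Some c => A c | None => True end.

(* Mal'cev nilpotency of the semigroup (A, op) *)
Definition nilpotent (A : U -> Prop) : Prop :=
  exists n, 0 < n /\
    forall a b (z : nat -> option U), A a -> A b -> (forall k, oin A (z k)) ->
      lam a b z n = rho a b z n.

Inductive gen (X : U -> Prop) : U -> Prop :=
  | gen_base u : X u -> gen X u
  | gen_op u v : gen X u -> gen X v -> gen X (op u v).

(* I is a (possibly empty) ideal of the subsemigroup A *)
Definition is_ideal (A : U -> Prop) (I : U -> Prop) : Prop :=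
  (forall u, I u -> A u) /\
  (forall a u, A a -> I u -> I (op a u) /\ I (op u a)).

End Semigroups.

Section Rees.
Variables (T : finType) (op : T -> T -> T).

(* Rees factor A/I (I an ideal of A): elements are Some s with s in A \ I,
   plus the zero None if I is nonempty; if I is empty, A/I = A. *)
Definition rees_op (I : {set T}) (u v : option T) : option T :=
  match u, v with
  | Some x, Some y => if op x y \in I then None else Some (op x y)
  | _, _ => None
  end.

Definition rees_carrier (A : T -> Prop) (I : {set T}) (u : option T) : Prop :=
  match u with Some x => A x /\ x \notin I | None => I != set0 end.

Definition rees_img (I : {set T}) (s : T) : option T :=
  if s \in I then None else Some s.

Definition nn_edge (I : {set T}) (u v : option T) : Prop :=
  ~ nilpotent (rees_op I) (gen (rees_op I) (fun w => w = u \/ w = v)).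

(* pseudo-nilpotency of the semigroup (T, op); w k is w_k (k = 1..m) *)
Definition pseudo_nilpotent : Prop :=
  forall (x y : T) (w : nat -> option T) (m t : nat) (I : {set T}),
    let Tg := gen op (fun u => u = x \/ u = y \/
                        exists2 k, 0 < k <= m & w k = Some u) in
    is_ideal op Tg (fun u => u \in I) ->
    t < m ->
    lam op x y w t <> rho op x y w t ->
    lam op x y w t = lam op x y w m ->
    rho op x y w t = rho op x y w m ->
    lam op x y w m \notin I -> rho op x y w m \notin I ->
    forall i, i <= m ->
      nn_edge I (rees_img I (lam op x y w i)) (rees_img I (rho op x y w i)).

End Rees.

(* Since S is finite, the pairs (lambda_n, rho_n) eventually cycle, and it
   suffices to show that every cycle (lambda_t, rho_t) = (lambda_m, rho_m),
   t < m, lies on the diagonal.  Suppose lambda_t <> rho_t.  If lambda_m or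
   rho_m lies in I, then lambda_(t+1) and rho_(t+1) both lie in I, and
   pseudo-nilpotency (with the empty ideal) makes <lambda_(t+1), rho_(t+1)> a
   non-nilpotent subsemigroup of the nilpotent semigroup I.  Otherwise take
   the subsemigroup T generated by x, y and the w_k, with ideal J = I /\ T:
   pseudo-nilpotency makes the subsemigroup of T/J generated by the images of
   x and y non-nilpotent, yet T/J embeds in the nilpotent semigroup S/I. *)

From mathcomp Require Import all_boot boolp.

Set Implicit Arguments. Unset Strict Implicit. Unset Printing Implicit Defensive.

Lemma nat_fun_collision (T : finType) (f : nat -> T) :
  exists i j, i < j <= #|T| /\ f i = f j.
Proof.
pose g (i : 'I_#|T|.+1) := f i.
have : ~~ injectiveb g.
  by apply/injectiveP => /leq_card; rewrite card_ord ltnn.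
case/injectivePn=> i [j]; rewrite neq_ltn => /orP[] ij gij.
- by exists i, j; rewrite ij -ltnS ltn_ord.
- by exists j, i; rewrite ij -ltnS ltn_ord.
Qed.

Section SemigroupFacts.
Variables (U : Type) (op : U -> U -> U).

Lemma lamS x y w k :
  lam op x y w k.+1 = mulz op (lam op x y w k) (w k.+1) (rho op x y w k).
Proof. by []. Qed.

Lemma rhoS x y w k :
  rho op x y w k.+1 = mulz op (rho op x y w k) (w k.+1) (lam op x y w k).
Proof. by []. Qed.

Lemma lam_rho_eq_ge x y w k n :
  lam op x y w k = rho op x y w k -> k <= n -> lam op x y w n = rho op x y w n.
Proof.
move=> eq_k /subnKC <-; elim: (n - k) => [|d IHd]; first by rewrite addn0.
by rewrite addnS lamS rhoS IHd.
Qed.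

Lemma gen_sub (X A : U -> Prop) :
  (forall u, X u -> A u) -> (forall u v, A u -> A v -> A (op u v)) ->
  forall u, gen op X u -> A u.
Proof.
by move=> XA opA u; elim=> [v /XA | v1 v2 _ A1 _ A2]; last exact: opA.
Qed.

End SemigroupFacts.

Section NilpotentEmbedding.
Variables (U V : Type) (opU : U -> U -> U) (opV : V -> V -> V).
Variables (A : U -> Prop) (B : V -> Prop) (f : U -> V).
Hypotheses (opA : forall u v, A u -> A v -> A (opU u v))
  (f_morph : forall u v, A u -> A v -> f (opU u v) = opV (f u) (f v))
  (f_inj : forall u v, A u -> A v -> f u = f v -> u = v)
  (f_into : forall u, A u -> B (f u)).

Lemma mulz_closed u c v : A u -> oin A c -> A v -> A (mulz opU u c v).
Proof. by case: c => [c|] /= Au Ac Av; do ?apply: opA. Qed.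

Lemma mulz_morph u c v : A u -> oin A c -> A v ->
  f (mulz opU u c v) = mulz opV (f u) (omap f c) (f v).
Proof.
case: c => [c|] /= Au Ac Av; last exact: f_morph.
by rewrite !f_morph //; apply: opA.
Qed.

Lemma lamrho_morph x y w : A x -> A y -> (forall k, oin A (w k)) ->
  forall n, [/\ A (lam opU x y w n), A (rho opU x y w n) &
    lamrho opV (f x) (f y) (omap f \o w) n
      = (f (lam opU x y w n), f (rho opU x y w n))].
Proof.
move=> Ax Ay Aw; elim=> [|n [Al Ar IHn]] //=.
rewrite IHn -!mulz_morph // lamS rhoS.
by split=> //; apply: mulz_closed.
Qed.

Lemma nilpotent_embedding : nilpotent opV B -> nilpotent opU A.
Proof.
case=> n [n_gt0 nilB]; exists n; split=> // x y w Ax Ay Aw.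
have [Al Ar eq_n] := lamrho_morph Ax Ay Aw n.
apply: f_inj => //; have := nilB _ _ (omap f \o w) (f_into Ax) (f_into Ay).
rewrite /lam /rho eq_n; apply=> k /=.
by have := Aw k; case: (w k) => //= c /f_into.
Qed.

End NilpotentEmbedding.

Section Ideals.
Variables (T : finType) (op : T -> T -> T).

Lemma set0_ideal (A : T -> Prop) : is_ideal op A (fun u => u \in set0).
Proof. by split=> [u | a u _]; rewrite in_set0. Qed.

Lemma mulz_ideal (I : {set T}) u c v :
  is_ideal op (fun _ => True) (fun u => u \in I) ->
  (u \in I) || (v \in I) -> mulz op u c v \in I.
Proof.
case=> _ idI /orP[uI | vI]; case: c => [c|] /=.
- by apply: (idI _ _ _ (idI _ _ _ uI).2).2.
- exact: (idI _ _ _ uI).2.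
- exact: (idI _ _ _ vI).1.
- exact: (idI _ _ _ vI).1.
Qed.

End Ideals.

Section ReesQuotients.
Variables (T : finType) (op : T -> T -> T).

Lemma rees_carrier_op (C : T -> Prop) (J : {set T}) u v :
  (forall a b, C a -> C b -> C (op a b)) ->
  rees_carrier C J u -> rees_carrier C J v ->
  rees_carrier C J (rees_op op J u v).
Proof.
move=> opC; case: u => [a [Ca _]|//]; case: v => [b [Cb _]|//] /=.
case: ifP => [abJ | /negbT abJ]; last by split; first exact: opC.
by apply/set0Pn; exists (op a b).
Qed.

Lemma rees_img_carrier (C : T -> Prop) (J : {set T}) u :
  C u -> rees_carrier C J (rees_img J u).
Proof.
by move=> Cu; rewrite /rees_img; case: ifPn => uJ //=; apply/set0Pn; exists u.
Qed.

Lemma rees_carrier_set0 (C : T -> Prop) u :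
  rees_carrier C set0 u -> exists2 a, u = Some a & C a.
Proof. by case: u => [a [Ca _]|/=]; [exists a | rewrite eqxx]. Qed.

Lemma rees_op_set0 a b : rees_op op set0 (Some a) (Some b) = Some (op a b).
Proof. by rewrite /= in_set0. Qed.

Section Restriction.
Variables (C : T -> Prop) (I J : {set T}).
Hypotheses (opC : forall a b, C a -> C b -> C (op a b))
  (subJI : J \subset I) (JE : forall a, C a -> (a \in J) = (a \in I)).

Lemma rees_carrier_restrict u :
  rees_carrier C J u -> rees_carrier (fun _ => True) I u.
Proof.
case: u => [a [Ca aJ] | /set0Pn[a aJ]] /=; first by rewrite -JE.
by apply/set0Pn; exists a; apply: (subsetP subJI).
Qed.

Lemma rees_op_restrict u v : rees_carrier C J u -> rees_carrier C J v ->
  rees_op op J u v = rees_op op I u v.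
Proof.
case: u => [a [Ca _]|//]; case: v => [b [Cb _]|//] /=.
by rewrite JE //; apply: opC.
Qed.

End Restriction.

End ReesQuotients.

Section CyclesAreDiagonal.
Variables (T : finType) (op : T -> T -> T) (I : {set T}).
Hypotheses (pnS : pseudo_nilpotent op)
  (idealI : is_ideal op (fun _ => True) (fun u => u \in I))
  (nilI : nilpotent op (fun u => u \in I))
  (nilSI : nilpotent (rees_op op I) (rees_carrier (fun _ => True) I)).
Variables (x y : T) (w : nat -> option T) (t m : nat).
Hypotheses (t_lt_m : t < m) (lam_tm : lam op x y w t = lam op x y w m)
  (rho_tm : rho op x y w t = rho op x y w m).

Lemma cycle_meeting_ideal_diagonal :
  (lam op x y w m \in I) || (rho op x y w m \in I) ->
  lam op x y w t = rho op x y w t.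
Proof.
move=> hitI; apply/eqP; apply: contraT => /eqP ne_t; exfalso.
have := pnS (set0_ideal op _) t_lt_m ne_t lam_tm rho_tm
  (negbT (in_set0 _)) (negbT (in_set0 _)) t_lt_m.
rewrite /nn_edge /rees_img !in_set0; apply.
have lamI : lam op x y w t.+1 \in I by rewrite lamS lam_tm rho_tm mulz_ideal.
have rhoI : rho op x y w t.+1 \in I
  by rewrite rhoS lam_tm rho_tm mulz_ideal // orbC.
have opI a b : a \in I -> b \in I -> op a b \in I.
  by move=> _ bI; apply: (idealI.2 a b Logic.I bI).1.
set A := gen _ _; have inA u : A u -> exists2 a, u = Some a & a \in I.
  move=> Au; apply: rees_carrier_set0; move: u Au; apply: gen_sub.
    by move=> u [] ->; split; rewrite ?in_set0.
  by move=> u v; apply: rees_carrier_op.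
apply: (nilpotent_embedding (f := odflt x)) nilI.
- exact: gen_op.
- by move=> _ _ /inA[a -> _] /inA[b -> _]; rewrite rees_op_set0.
- by move=> _ _ /inA[a -> _] /inA[b -> _] /= ->.
- by move=> _ /inA[a -> aI].
Qed.

Lemma cycle_avoiding_ideal_diagonal :
  lam op x y w m \notin I -> rho op x y w m \notin I ->
  lam op x y w t = rho op x y w t.
Proof.
move=> lamI rhoI; apply/eqP; apply: contraT => /eqP ne_t; exfalso.
pose Tg := gen op (fun u => u = x \/ u = y \/
  exists2 k, 0 < k <= m & w k = Some u).
have opTg a b : Tg a -> Tg b -> Tg (op a b) by apply: gen_op.
pose J := [set a | (a \in I) && `[< Tg a >]].
have JE a : Tg a -> (a \in J) = (a \in I).
  by move=> Tga; rewrite inE; case: asboolP; rewrite ?andbT.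
have subJI : J \subset I by apply/subsetP => a; rewrite inE => /andP[].
have idealJ : is_ideal op Tg (fun u => u \in J).
  split=> [a | b a Tgb]; rewrite inE => /andP[aI /asboolP Tga] //.
  have [baI abI] := idealI.2 b a Logic.I aI.
  by rewrite !JE //; apply: opTg.
have := pnS idealJ t_lt_m ne_t lam_tm rho_tm
  (contra (subsetP subJI _) lamI) (contra (subsetP subJI _) rhoI) (leq0n m).
rewrite /nn_edge; apply.
set A := gen _ _; have inA u : A u -> rees_carrier Tg J u.
  move: u; apply: gen_sub.
    by move=> u [] ->; apply: rees_img_carrier; apply: gen_base; auto.
  by move=> u v; apply: rees_carrier_op.
apply: (nilpotent_embedding (f := id)) nilSI.
- exact: gen_op.
- by move=> u v /inA Ju /inA Jv; apply: (rees_op_restrict opTg JE).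
- by [].
- by move=> u /inA; apply: (rees_carrier_restrict subJI JE).
Qed.

End CyclesAreDiagonal.

Theorem lemma2p3 (T : finType) (op : T -> T -> T) (op_assoc : associative op)
  (I : {set T}) :
  pseudo_nilpotent op ->
  is_ideal op (fun _ => True) (fun u => u \in I) ->
  nilpotent op (fun u => u \in I) ->
  nilpotent (rees_op op I) (rees_carrier (fun _ => True) I) ->
  nilpotent op (fun _ => True).
Proof.
move=> pnS idealI nilI nilSI.
exists #|{: T * T}|.+1; split=> // x y w _ _ _.
have [t [m [/andP[t_lt_m m_le] cycle]]] := nat_fun_collision (lamrho op x y w).
have lam_tm : lam op x y w t = lam op x y w m by rewrite /lam cycle.
have rho_tm : rho op x y w t = rho op x y w m by rewrite /rho cycle.
have diag_t : lam op x y w t = rho op x y w t.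
  case: (boolP ((lam op x y w m \in I) || (rho op x y w m \in I))).
    exact: cycle_meeting_ideal_diagonal.
  by rewrite negb_or => /andP[]; apply: cycle_avoiding_ideal_diagonal.
apply: lam_rho_eq_ge diag_t _.
by rewrite (leq_trans (ltnW t_lt_m)) // (leq_trans m_le).
Qed.
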